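(* Let $L_1,L_2\in\mathcal{L}_{\mathrm{irr}}$ be irreducible subspaces of an arrangement $\mathcal{H}\subset\mathbb{CP}^n$ such that $L=L_1\cap L_2$ is non-empty and reducible. Then the irreducible components of $L$ are exactly $L_1$ and $L_2$; in particular $L_1+L_2=\mathbb{CP}^n$.
   Context: $\mathcal{H}$ is a finite set of distinct hyperplanes in $\mathbb{CP}^n$; $\mathcal{L}$ the set of non-empty proper intersections of members; $\mathcal{H}_L=\{H\in\mathcal{H}:L\subset H\}$. A splitting of an arrangement $\mathcal{K}$ is a decomposition $\mathcal{K}=\mathcal{K}_1\cup\mathcal{K}_2$ whose centres (intersections of members; $\mathbb{CP}^n$ for the empty collection) $T_1,T_2$ satisfy $T_1+T_2=\mathbb{CP}^n$ (projective span); non-trivial if both parts are non-empty; $\mathcal{K}$ is irreducible if no non-trivial splitting exists. $L\in\mathcal{L}$ is irreducible if $\mathcal{H}_L$ is irreducible, reducible otherwise; $\mathcal{L}_{\mathrm{irr}}$ is the set of irreducible elements. The irreducible components of $L\in\mathcal{L}$ are the inclusion-minimal elements of $\mathcal{L}_{\mathrm{irr}}$ containing $L$. *)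

From HB Require Import structures.
From mathcomp Require Import all_boot all_order all_algebra.
From mathcomp Require Import complex.
From mathcomp Require Import reals.
Set Implicit Arguments. Unset Strict Implicit. Unset Printing Implicit Defensive.
Import Order.TTheory GRing.Theory Num.Theory.
Local Open Scope ring_scope.

(* Projective space CP^n is modelled by the vector space C^(n+1)
   ('rV[C]_(n.+1) with C = R[i] for a realType R, i.e. C = complex numbers);
   a projective subspace is a linear subspace {vspace C^(n+1)}; the empty
   projective subspace is 0%VS, CP^n itself is fullv; intersection is :&:,
   projective span is + ; inclusion is <=. A hyperplane of CP^n is a linear
   subspace of dimension n. *)

Section Arrangements.
Variables (R : realType) (n m : nat).
Local Notation V := 'rV[R[i]]_(n.+1).
Variable Hf : 'I_m -> {vspace V}.

(* centre of a collection of members (fullv for the empty collection) *)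
Definition centre (K : {set 'I_m}) : {vspace V} := (\bigcap_(i in K) Hf i)%VS.

Definition splitting (K K1 K2 : {set 'I_m}) : Prop :=
  K = K1 :|: K2 /\ (centre K1 + centre K2)%VS = fullv.

Definition nontrivial_splitting (K K1 K2 : {set 'I_m}) : Prop :=
  splitting K K1 K2 /\ K1 != set0 /\ K2 != set0.

Definition irreducible_arr (K : {set 'I_m}) : Prop :=
  ~ exists K1 K2, nontrivial_splitting K K1 K2.

Definition in_calL (L : {vspace V}) : Prop :=
  exists K : {set 'I_m}, K != set0 /\ L = centre K /\ L != 0%VS /\ L != fullv.

Definition HL (L : {vspace V}) : {set 'I_m} := [set i | (L <= Hf i)%VS].

Definition irreducible_elt (L : {vspace V}) : Prop :=
  in_calL L /\ irreducible_arr (HL L).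

Definition reducible_elt (L : {vspace V}) : Prop :=
  in_calL L /\ ~ irreducible_arr (HL L).

Definition irr_component (L X : {vspace V}) : Prop :=
  irreducible_elt X /\ (L <= X)%VS /\
  forall Y : {vspace V}, irreducible_elt Y -> (L <= Y)%VS -> (Y <= X)%VS -> Y = X.

End Arrangements.

From HB Require Import structures.
From mathcomp Require Import all_boot all_order all_algebra.
From mathcomp Require Import complex.
From mathcomp Require Import reals.
From mathcomp Require Import zify.
From Stdlib Require Import Classical.
Import Order.TTheory GRing.Theory Num.Theory.
Local Open Scope ring_scope.

(* A non-trivial splitting H_L = K1 u K2 of the reducible L = L1 n L2 gives
   centres T1, T2 with T1 + T2 = CP^n and T1 n T2 = L.  Restricting the
   splitting to H_X shows that every irreducible X containing L contains T1
   or T2.  Applied to L1 and L2, and since no Ti lies in both (it would force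
   the other centre to be CP^n, i.e. an empty part), we get after relabelling
   T1 <= L1 and T2 <= L2; the dimension formula then forces T1 = L1, T2 = L2.
   So the irreducible elements above L are exactly those above L1 or L2,
   whose minimal ones are L1 and L2. *)

Section SubspaceLemmas.
Set Implicit Arguments. Unset Strict Implicit.
Variables (F : fieldType) (vT : vectType F).

Lemma addv_eq_fullv_subv (T1 T2 : {vspace vT}) :
  (T1 <= T2)%VS -> (T1 + T2)%VS = fullv -> T2 = fullv.
Proof. by move=> /addv_idPr ->. Qed.

Lemma complementary_subv_eq (T1 T2 L1 L2 : {vspace vT}) :
  (T1 <= L1)%VS -> (T2 <= L2)%VS -> (T1 + T2)%VS = fullv ->
  (T1 :&: T2)%VS = (L1 :&: L2)%VS ->
  T1 = L1 /\ T2 = L2.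
Proof.
move=> sT1 sT2 T12_full T12_cap.
have L12_full : (L1 + L2)%VS = fullv.
  by apply/eqP; rewrite eqEsubv subvf -T12_full addvS.
have dimT := dimv_sum_cap T1 T2; have dimL := dimv_sum_cap L1 L2.
rewrite T12_full T12_cap in dimT; rewrite L12_full in dimL.
have le1 := dimvS sT1; have le2 := dimvS sT2.
by split=> //; apply/eqP; rewrite eqEdim ?sT1 ?sT2 //=; lia.
Qed.

End SubspaceLemmas.

Section Arrangement.
Set Implicit Arguments. Unset Strict Implicit.
Variables (R : realType) (n m : nat).
Variable Hf : 'I_m -> {vspace 'rV[R[i]]_(n.+1)}.
Implicit Types (K : {set 'I_m}) (X Y L : {vspace 'rV[R[i]]_(n.+1)}).

Local Notation centre := (centre Hf).
Local Notation HL := (HL Hf).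

Lemma sub_centreP K X : reflect (forall i, i \in K -> (X <= Hf i)%VS) (X <= centre K)%VS.
Proof. exact: subv_bigcapP. Qed.

Lemma centreS K K' : K \subset K' -> (centre K' <= centre K)%VS.
Proof.
by move=> /subsetP sKK'; apply/sub_centreP => i /sKK' iK'; apply/(bigcapv_inf i).
Qed.

Lemma centreU K K' : centre (K :|: K') = (centre K :&: centre K')%VS.
Proof.
apply/eqP; rewrite eqEsubv subv_cap !centreS ?subsetUl ?subsetUr //=.
apply/sub_centreP => i; rewrite inE => /orP[] iK.
  by apply: subv_trans (capvSl _ _) _; apply/(bigcapv_inf i).
by apply: subv_trans (capvSr _ _) _; apply/(bigcapv_inf i).
Qed.

Lemma HLS X Y : (X <= Y)%VS -> HL Y \subset HL X.
Proof. by move=> sXY; apply/subsetP => i; rewrite !inE; apply: subv_trans. Qed.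

Lemma centre_HL X : in_calL Hf X -> centre (HL X) = X.
Proof.
move=> [K [_ [-> _]]]; apply/eqP; rewrite eqEsubv; apply/andP; split.
  apply/sub_centreP => i iK; apply/(bigcapv_inf i) => //.
  by rewrite inE; apply/(bigcapv_inf i).
by apply/sub_centreP => i; rewrite inE.
Qed.

Lemma sub_centre_HL K X : in_calL Hf X -> HL X \subset K -> (centre K <= X)%VS.
Proof. by move=> calX sK; rewrite -(centre_HL calX) centreS. Qed.

Hypothesis Hdim : forall j, \dim (Hf j) = n.

Lemma centre_eq_fullv K : centre K = fullv -> K = set0.
Proof.
move=> cK; apply/eqP/set0Pn => -[i iK].
have /dimvS : (fullv <= Hf i)%VS by rewrite -cK; apply/(bigcapv_inf i).
by rewrite Hdim dimvf /dim /= mul1n ltnn.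
Qed.

(* Intersecting both parts with K gives a splitting of K, trivial by irreducibility. *)
Lemma irreducible_sub_splitting K K1 K2 :
  (centre K1 + centre K2)%VS = fullv ->
  irreducible_arr Hf K -> K \subset K1 :|: K2 -> K \subset K1 \/ K \subset K2.
Proof.
move=> T12_full irrK sK.
have [sK1|/subsetPn[i iK iK1]] := boolP (K \subset K1); first by left.
have [sK2|/subsetPn[j jK jK2]] := boolP (K \subset K2); first by right.
case: irrK; exists (K :&: K1), (K :&: K2); split; [split|split].
- by rewrite -setIUr; apply/esym/setIidPl.
- apply/eqP; rewrite eqEsubv subvf -T12_full.
  by apply: addvS; apply: centreS; rewrite subsetIr.
- apply/set0Pn; exists j; rewrite inE jK /=.
  by move/subsetP: sK => /(_ j jK); rewrite inE (negbTE jK2) orbF.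
- apply/set0Pn; exists i; rewrite inE iK /=.
  by move/subsetP: sK => /(_ i iK); rewrite inE (negbTE iK1).
Qed.

Lemma irreducible_elt_sup_centre L K1 K2 X :
  HL L = K1 :|: K2 -> (centre K1 + centre K2)%VS = fullv ->
  irreducible_elt Hf X -> (L <= X)%VS ->
  (centre K1 <= X)%VS \/ (centre K2 <= X)%VS.
Proof.
move=> HL_split T12_full [calX irrX] sLX.
have sHL : HL X \subset K1 :|: K2 by rewrite -HL_split HLS.
by case: (irreducible_sub_splitting T12_full irrX sHL) => sK;
  [left | right]; apply: sub_centre_HL.
Qed.

Lemma irr_component_pair L (L1 L2 : {vspace 'rV[R[i]]_(n.+1)}) :
  irreducible_elt Hf L1 -> irreducible_elt Hf L2 -> (L <= L1)%VS -> (L <= L2)%VS ->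
  ~~ (L1 <= L2)%VS -> ~~ (L2 <= L1)%VS ->
  (forall X, irreducible_elt Hf X -> (L <= X)%VS -> (L1 <= X)%VS \/ (L2 <= X)%VS) ->
  forall X, irr_component Hf L X <-> X = L1 \/ X = L2.
Proof.
move=> irr1 irr2 sL1 sL2 n12 n21 above X; split.
  move=> [irrX [sLX minX]].
  by case: (above X irrX sLX) => s; [left | right]; apply/esym/minX.
have component L' L'' : irreducible_elt Hf L' -> (L <= L')%VS -> ~~ (L'' <= L')%VS ->
    (forall Y, irreducible_elt Hf Y -> (L <= Y)%VS -> (L' <= Y)%VS \/ (L'' <= Y)%VS) ->
    irr_component Hf L L'.
  move=> irr' sL' n' above'; do 2!split=> //.
  move=> Y irrY sLY sYL'; case: (above' Y irrY sLY) => sY.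
    by apply/eqP; rewrite eqEsubv sYL' sY.
  by case/negP: n'; apply: subv_trans sY sYL'.
case=> ->; first exact: component irr1 sL1 n21 above.
apply: component irr2 sL2 n12 _ => Y irrY sLY.
by rewrite or_comm; apply: above.
Qed.


Lemma nontrivial_splitting_centres (L1 L2 : {vspace 'rV[R[i]]_(n.+1)}) K1 K2 :
  irreducible_elt Hf L1 -> irreducible_elt Hf L2 -> in_calL Hf (L1 :&: L2)%VS ->
  nontrivial_splitting Hf (HL (L1 :&: L2)%VS) K1 K2 ->
  (centre K1 = L1 /\ centre K2 = L2) \/ (centre K1 = L2 /\ centre K2 = L1).
Proof.
move=> irr1 irr2 calL [[HL_split T12_full] [K1_n0 K2_n0]].
have T12_cap : (centre K1 :&: centre K2)%VS = (L1 :&: L2)%VS.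
  by rewrite -centreU -HL_split centre_HL.
have sup := irreducible_elt_sup_centre HL_split T12_full.
have not_both T T' K' : (T <= L1)%VS -> (T <= L2)%VS ->
    (T + T')%VS = fullv -> (T :&: T')%VS = (L1 :&: L2)%VS ->
    T' = centre K' -> K' != set0 -> False.
  move=> sT1 sT2 TT_full TT_cap TK' /negP; apply; apply/eqP/centre_eq_fullv.
  rewrite -TK'; apply: addv_eq_fullv_subv TT_full.
  by apply: subv_trans (capvSr T _); rewrite TT_cap subv_cap sT1.
case: (sup L1 irr1 (capvSl _ _)) => s1; case: (sup L2 irr2 (capvSr _ _)) => s2.
- by case: (not_both _ _ K2 s1 s2 T12_full T12_cap erefl K2_n0).
- by have [-> ->] := complementary_subv_eq s1 s2 T12_full T12_cap; left.
- rewrite addvC in T12_full; rewrite capvC in T12_cap.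
  by have [-> ->] := complementary_subv_eq s1 s2 T12_full T12_cap; right.
- rewrite addvC in T12_full; rewrite capvC in T12_cap.
  by case: (not_both _ _ K1 s1 s2 T12_full T12_cap erefl K1_n0).
Qed.

End Arrangement.

Theorem lemma2p14 (R : realType) (n m : nat)
    (Hf : 'I_m -> {vspace 'rV[R[i]]_(n.+1)})
    (Hinj : injective Hf)
    (Hdim : forall j, \dim (Hf j) = n)
    (L1 L2 : {vspace 'rV[R[i]]_(n.+1)}) :
  irreducible_elt Hf L1 -> irreducible_elt Hf L2 ->
  (L1 :&: L2)%VS != 0%VS ->
  reducible_elt Hf (L1 :&: L2)%VS ->
  (forall X, irr_component Hf (L1 :&: L2)%VS X <-> (X = L1 \/ X = L2)) /\
  (L1 + L2)%VS = fullv.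
Proof.
move=> irr1 irr2 _ [calL redL].
have [K1 [K2 splitL]] :
    exists K1 K2, nontrivial_splitting Hf (HL Hf (L1 :&: L2)%VS) K1 K2.
  exact: NNPP.
have [[HL_split T12_full] _] := splitL.
have centres := nontrivial_splitting_centres Hdim irr1 irr2 calL splitL.
have above X : irreducible_elt Hf X -> (L1 :&: L2 <= X)%VS ->
    (L1 <= X)%VS \/ (L2 <= X)%VS.
  move=> irrX sLX; have := irreducible_elt_sup_centre HL_split T12_full irrX sLX.
  by case: centres => [[-> ->] | [-> ->]] //; rewrite or_comm.
have not_sub L' : (L1 :&: L2)%VS = L' -> irreducible_elt Hf L' -> False.
  by move=> eL [_ irrL]; apply: redL; rewrite eL.
have n12 : ~~ (L1 <= L2)%VS by apply/negP => /capv_idPl /not_sub; apply.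
have n21 : ~~ (L2 <= L1)%VS by apply/negP => /capv_idPr /not_sub; apply.
split; first exact: irr_component_pair irr1 irr2 (capvSl L1 L2) (capvSr L1 L2) n12 n21 above.
by move: T12_full; case: centres => [[-> ->] | [-> ->]] //; rewrite addvC.
Qed.
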